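(* Let $P=\{S_1,\ldots,S_n\}$ be a homothetic packing of $n$ squares. Then the graphs $([n],E_x)$ and $([n],E_y)$ are triangle-free.
   Context: Let $S=\{(x,y): -1\le x,y\le 1\}$. A homothetic packing of $n$ squares is a set $P=\{S_1,\ldots,S_n\}$ with $S_i=r_iS+p_i$, $r_i>0$, $p_i=(x_i,y_i)\in\mathbb{R}^2$, such that distinct squares have disjoint interiors. Its contact graph is $G=([n],E)$ where $\{i,j\}\in E$ iff $i\neq j$ and $S_i\cap S_j\ne\emptyset$. $E_x\subseteq E$ is the set of pairs $\{i,j\}$ with $r_i+r_j=|x_i-x_j|\ge|y_i-y_j|$ ($x$-direction contacts), and $E_y\subseteq E$ the set of pairs with $r_i+r_j=|y_i-y_j|\ge|x_i-x_j|$ ($y$-direction contacts); $E=E_x\cup E_y$. *)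

From Stdlib Require Import Reals.
Open Scope R_scope.

(* A homothetic copy r*S + (px,py) of S = [-1,1]^2. Squares are indexed by
   natural numbers i < n (i.e. [n] = {0,...,n-1}). *)

Definition in_interior (r px py u v : R) : Prop :=
  Rabs (u - px) < r /\ Rabs (v - py) < r.

Definition homothetic_packing (n : nat) (r x y : nat -> R) : Prop :=
  (forall i, (i < n)%nat -> 0 < r i) /\
  (forall i j, (i < n)%nat -> (j < n)%nat -> i <> j ->
     forall u v, ~ (in_interior (r i) (x i) (y i) u v /\
                    in_interior (r j) (x j) (y j) u v)).

Definition Ex (r x y : nat -> R) (i j : nat) : Prop :=
  i <> j /\ r i + r j = Rabs (x i - x j) /\ Rabs (x i - x j) >= Rabs (y i - y j).

Definition Ey (r x y : nat -> R) (i j : nat) : Prop :=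
  i <> j /\ r i + r j = Rabs (y i - y j) /\ Rabs (y i - y j) >= Rabs (x i - x j).

Definition triangle_free (n : nat) (E : nat -> nat -> Prop) : Prop :=
  ~ exists i j k, (i < n)%nat /\ (j < n)%nat /\ (k < n)%nat /\
      E i j /\ E j k /\ E i k.

From Stdlib Require Import Reals Lra.
Open Scope R_scope.

(* A triangle of x-contacts (resp. y-contacts) projects to three intervals
   [p - r, p + r] of positive length on the x-axis (resp. y-axis) that abut
   pairwise.  That is impossible: one centre lies between the other two, so
   the outer distance is the sum of the inner ones, ra + 2 rb + rc > ra + rc. *)

Lemma no_three_pairwise_abutting_intervals (a b c ra rb rc : R) :
  0 < ra -> 0 < rb -> 0 < rc ->
  ra + rb = Rabs (a - b) -> rb + rc = Rabs (b - c) ->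
  ra + rc <> Rabs (a - c).
Proof.
  intros; split_Rabs; lra.
Qed.

Lemma triangle_free_of_abutting (n : nat) (r p : nat -> R)
    (E : nat -> nat -> Prop) :
  (forall i, (i < n)%nat -> 0 < r i) ->
  (forall i j, E i j -> r i + r j = Rabs (p i - p j)) ->
  triangle_free n E.
Proof.
  intros r_pos abut [i [j [k [hi [hj [hk [eij [ejk eik]]]]]]]].
  exact (no_three_pairwise_abutting_intervals _ _ _ _ _ _
           (r_pos i hi) (r_pos j hj) (r_pos k hk)
           (abut _ _ eij) (abut _ _ ejk) (abut _ _ eik)).
Qed.

Theorem lemma5 (n : nat) (r x y : nat -> R) :
  homothetic_packing n r x y ->
  triangle_free n (Ex r x y) /\ triangle_free n (Ey r x y).
Proof.
  intros [r_pos _]; split.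
  - apply (triangle_free_of_abutting n r x); [exact r_pos |].
    intros i j [_ [tangent _]]; exact tangent.
  - apply (triangle_free_of_abutting n r y); [exact r_pos |].
    intros i j [_ [tangent _]]; exact tangent.
Qed.
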